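(* Let $a\in\mathbb{R}$ with $a\ge1$ and let $n,s,t\in\mathbb{N}$ with $1\le s\le t\le n$. Assume $as+t\ge n$, $t\ge as$ and $s+as\le t$. Then the number $\mathcal{M}^{(a)}(n,s,t)$ of monochromatic generalized Schur triples of $\{1,\dots,n\}$ under the coloring $R^sB^{t-s}R^{n-t}$ equals \[ \sum_{y=1}^{\lfloor s/a\rfloor}\ \sum_{x=1}^{s-\lfloor ay\rfloor}1\;+\sum_{y=s+1}^{\lfloor (t-s)/a\rfloor}\ \sum_{x=s+1}^{t-\lfloor ay\rfloor}1\;+\sum_{y=1}^{\lfloor (n-t)/a\rfloor}\ \sum_{x=t+1}^{n-\lfloor ay\rfloor}1\;+\sum_{y=t+1}^{\lfloor n/a\rfloor}\ \sum_{x=1}^{n-\lfloor ay\rfloor}1 , \] and the monochromatic generalized Schur triples are exactly the triples $(x,y,x+\lfloor ay\rfloor)$ with $(x,y)$ ranging over the index pairs of these four double sums.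
   Context: For real $a>0$, a generalized Schur triple on $[n]=\{1,\dots,n\}$ is an ordered triple $T=(x,y,x+\lfloor ay\rfloor)\in[n]^3$. The coloring $R^sB^{t-s}R^{n-t}$ colors $1,\dots,s$ and $t+1,\dots,n$ red and $s+1,\dots,t$ blue; $T$ is monochromatic if $T\in(\{1,\dots,s\}\cup\{t+1,\dots,n\})^3$ or $T\in\{s+1,\dots,t\}^3$, and $\mathcal{M}^{(a)}(n,s,t)$ is the number of such $T$. Convention: a sum whose lower bound exceeds its upper bound is $0$. *)

From HB Require Import structures.
From mathcomp Require Import all_boot all_order all_algebra.
From mathcomp Require Import reals.
Set Implicit Arguments. Unset Strict Implicit. Unset Printing Implicit Defensive.
Import Order.TTheory GRing.Theory Num.Theory.
Local Open Scope ring_scope.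

(* floor of a real, as a natural number (the argument is nonnegative in all uses) *)
Definition nfloor {R : realType} (x : R) : nat := `|Num.floor x|%N.

Definition fl {R : realType} (a : R) (y : nat) : nat := nfloor (a * y%:R).

(* colour classes of the colouring R^s B^(t-s) R^(n-t) of [n] *)
Definition red (s t z : nat) : bool := (z <= s)%N || (t < z)%N.
Definition blue (s t z : nat) : bool := (s < z)%N && (z <= t)%N.

Definition in_range (n z : nat) : bool := (1 <= z)%N && (z <= n)%N.

Definition mono_triple {R : realType} (a : R) (n s t x y : nat) : bool :=
  let z := (x + fl a y)%N in
  [&& in_range n x, in_range n y, in_range n z &
      [&& red s t x, red s t y & red s t z] || [&& blue s t x, blue s t y & blue s t z]].

(* M^(a)(n,s,t): the triple is determined by (x,y), so count pairs in [n]^2 *)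
Definition Mcount {R : realType} (a : R) (n s t : nat) : nat :=
  (\sum_(1 <= y < n.+1) \sum_(1 <= x < n.+1) (mono_triple a n s t x y : nat))%N.

Definition dsum (ylo yhi xlo : nat) (xhi : nat -> nat) : nat :=
  (\sum_(ylo <= y < yhi.+1) \sum_(xlo <= x < (xhi y).+1) 1)%N.

Definition dmem (ylo yhi xlo : nat) (xhi : nat -> nat) (x y : nat) : Prop :=
  (ylo <= y <= yhi)%N /\ (xlo <= x <= xhi y)%N.

From HB Require Import structures.
From mathcomp Require Import all_boot all_order all_algebra.
From mathcomp Require Import reals.
From mathcomp Require Import zify lra.
Set Implicit Arguments. Unset Strict Implicit. Unset Printing Implicit Defensive.
Import Order.TTheory GRing.Theory Num.Theory.
Local Open Scope ring_scope.

(* Write f = floor(a y) >= y and z = x + f.  Since a s <= t - s, a red y <= s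
   cannot carry x from the first red block past the blue one; since
   n <= a s + t <= 2 t, a red y > t cannot start from the last red block, and
   then x <= n - f < s.  Hence a monochromatic triple has x, y, z <= s, or is
   blue, or has x, z > t and y <= s, or has x <= s and y, z > t: the four index
   sets of the double sums.  The first three have y <= t and are separated by
   x, so the four are disjoint.  The bound y <= floor(k / a) lies between
   f < k and f <= k, and the case f = k never matters because it empties the
   range of x. *)

Lemma nfloorE (R : realType) (x : R) : 0 <= x -> nfloor x = Num.truncn x.
Proof. by move=> x_ge0; rewrite truncn_floor x_ge0. Qed.

Lemma nfloor_ge_nat (R : realType) (x : R) m :
  0 <= x -> (m <= nfloor x)%N = (m%:R <= x).
Proof. by move=> x_ge0; rewrite nfloorE // truncn_ge_nat. Qed.

Lemma nfloor_lt_nat (R : realType) (x : R) m :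
  0 <= x -> (nfloor x < m)%N = (x < m%:R).
Proof. by move=> x_ge0; rewrite nfloorE // truncn_lt_nat. Qed.

Lemma fl_lt_nat (R : realType) (a : R) y k :
  0 <= a -> (fl a y < k)%N = (a * y%:R < k%:R).
Proof. by move=> a_ge0; rewrite /fl nfloor_lt_nat ?mulr_ge0. Qed.

Lemma leq_fl (R : realType) (a : R) y : 1 <= a -> (y <= fl a y)%N.
Proof.
by move=> a_ge1; rewrite /fl nfloor_ge_nat ?ler_peMl ?mulr_ge0 // (le_trans ler01).
Qed.

Lemma leq_nfloor_div (R : realType) (a : R) y k :
  0 < a -> (y <= nfloor (k%:R / a))%N = (a * y%:R <= k%:R).
Proof.
move=> a_gt0; rewrite nfloor_ge_nat; last by rewrite divr_ge0 // ltW.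
by rewrite ler_pdivlMr // mulrC.
Qed.

Lemma fl_lt_leq_nfloor_div (R : realType) (a : R) y k :
  0 < a -> (fl a y < k)%N -> (y <= nfloor (k%:R / a))%N.
Proof. by move=> a_gt0; rewrite (fl_lt_nat _ _ (ltW a_gt0)) leq_nfloor_div // => /ltW. Qed.

Lemma leq_nfloor_div_fl (R : realType) (a : R) y k :
  0 < a -> (y <= nfloor (k%:R / a))%N -> (fl a y <= k)%N.
Proof.
move=> a_gt0; rewrite leq_nfloor_div // -ltnS (fl_lt_nat _ _ (ltW a_gt0)) -natr1.
by move=> ?; lra.
Qed.

Lemma nfloor_div_leq (R : realType) (a : R) k : 1 <= a -> (nfloor (k%:R / a) <= k)%N.
Proof.
move=> a_ge1; set m := nfloor _; apply: leq_trans (leq_fl m a_ge1) _.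
by apply: leq_nfloor_div_fl; rewrite ?(lt_le_trans ltr01).
Qed.

Lemma fl_add_gt (R : realType) (a : R) (n s t y : nat) :
  1 <= a -> (s <= t)%N -> n%:R <= a * s%:R + t%:R -> (t < y)%N ->
  (n < fl a y + s)%N.
Proof.
move=> a_ge1 s_le_t n_le t_lt_y.
have a_ge0 : 0 <= a by apply: le_trans a_ge1.
have ay_lt : a * y%:R < (fl a y).+1%:R by rewrite -fl_lt_nat.
have aty : a * t.+1%:R <= a * y%:R by rewrite ler_wpM2l // ler_nat.
(* a (t + 1) - (a s + t + 1 - s) = (a - 1) (t + 1 - s) *)
have slack : 0 <= (a - 1) * (t.+1%:R - s%:R).
  by rewrite mulr_ge0 ?subr_ge0 // ler_nat ltnW.
rewrite -(ltr_nat R) natrD; rewrite -!natr1 in ay_lt aty slack.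
nra.
Qed.

Lemma big_nat_mask (T : Type) (idx : T) (op : Monoid.law idx) m n lo hi F :
  (m <= lo)%N -> (hi <= n)%N ->
  \big[op/idx]_(lo <= i < hi) F i
    = \big[op/idx]_(m <= i < n) (if (lo <= i < hi)%N then F i else idx).
Proof.
move=> m_lo hi_n; rewrite -big_mkcond (@big_nat_widenl _ _ _ lo m) //.
by rewrite (@big_nat_widen _ _ _ m hi n).
Qed.

Definition dmemb (ylo yhi xlo : nat) (xhi : nat -> nat) (x y : nat) : bool :=
  (ylo <= y <= yhi)%N && (xlo <= x <= xhi y)%N.

Lemma dmemP ylo yhi xlo xhi x y :
  dmem ylo yhi xlo xhi x y <-> dmemb ylo yhi xlo xhi x y.
Proof. by rewrite /dmem /dmemb; split=> [[-> ->] | /andP[-> ->]]. Qed.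

Lemma dsumE n ylo yhi xlo xhi :
  (0 < ylo)%N -> (yhi <= n)%N -> (0 < xlo)%N -> (forall y, xhi y <= n)%N ->
  dsum ylo yhi xlo xhi
    = (\sum_(1 <= y < n.+1) \sum_(1 <= x < n.+1) dmemb ylo yhi xlo xhi x y)%N.
Proof.
move=> ylo_gt0 yhi_n xlo_gt0 xhi_n; rewrite /dsum (@big_nat_mask _ _ _ 1 n.+1) //.
apply: eq_bigr => y _; rewrite (@big_nat_mask _ _ _ 1 n.+1) ?ltnS ?xhi_n // /dmemb.
by case: (_ <= y <= _)%N; [apply: eq_bigr => x _; rewrite ltnS; case: ifP | rewrite big1].
Qed.

Section Regions.
Variables (R : realType) (a : R) (n s t : nat).
Hypotheses (a_ge1 : 1 <= a) (t_le_n : (t <= n)%N).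
Hypotheses (n_le : n%:R <= a * s%:R + t%:R) (s_as_le : s%:R + a * s%:R <= t%:R).

Let a_gt0 : 0 < a. Proof. exact: lt_le_trans ltr01 a_ge1. Qed.

Let as_le_t : a * s%:R <= t%:R.
Proof. by apply: le_trans s_as_le; rewrite lerDr. Qed.

Local Notation N k := (nfloor (k%:R / a)).
Local Notation low := (dmemb 1 (N s) 1 (fun y => s - fl a y)%N).
Local Notation mid := (dmemb s.+1 (N (t - s)%N) s.+1 (fun y => t - fl a y)%N).
Local Notation high := (dmemb 1 (N (n - t)%N) t.+1 (fun y => n - fl a y)%N).
Local Notation cross := (dmemb t.+1 (N n) 1 (fun y => n - fl a y)%N).

Lemma s_add_s_le_t : (s + s <= t)%N.
Proof. by rewrite -(ler_nat R) natrD (le_trans _ s_as_le) // lerD2l ler_peMl. Qed.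

Lemma n_le_t_add_t : (n <= t + t)%N.
Proof. by rewrite -(ler_nat R) natrD (le_trans n_le) // lerD2r. Qed.

Let s_le_t : (s <= t)%N. Proof. exact: leq_trans (leq_addl s s) s_add_s_le_t. Qed.

Lemma nfloor_div_n_sub_t_le_s : (N (n - t)%N <= s)%N.
Proof.
have : a * (N (n - t)%N)%:R <= (n - t)%N%:R by rewrite -leq_nfloor_div.
rewrite natrB // lerBrDr => am_le.
by rewrite -(ler_nat R) -(ler_pM2l a_gt0) -(lerD2r t%:R) (le_trans am_le n_le).
Qed.

Lemma fl_le_t_sub_s y : (y <= s)%N -> (fl a y <= t - s)%N.
Proof.
move=> y_le_s; rewrite -ltnS (fl_lt_nat _ _ (ltW a_gt0)) -natr1 natrB //.
have ay_le : a * y%:R <= t%:R - s%:R.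
  by rewrite lerBrDl (le_trans _ s_as_le) // lerD2l ler_pM2l // ler_nat.
by rewrite (le_lt_trans ay_le) // ltrDl.
Qed.

Lemma low_mono x y : low x y -> mono_triple a n s t x y.
Proof.
have := leq_fl y a_ge1; have := @leq_nfloor_div_fl _ a y s a_gt0.
rewrite /mono_triple /dmemb /red /blue /in_range /=; lia.
Qed.

Lemma mid_mono x y : mid x y -> mono_triple a n s t x y.
Proof.
have := leq_fl y a_ge1; have := @leq_nfloor_div_fl _ a y (t - s) a_gt0.
rewrite /mono_triple /dmemb /red /blue /in_range /=; lia.
Qed.

Lemma high_mono x y : high x y -> mono_triple a n s t x y.
Proof.
have := leq_fl y a_ge1; have := @leq_nfloor_div_fl _ a y (n - t) a_gt0.
have := nfloor_div_n_sub_t_le_s.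
rewrite /mono_triple /dmemb /red /blue /in_range /=; lia.
Qed.

Lemma cross_mono x y : cross x y -> mono_triple a n s t x y.
Proof.
have := leq_fl y a_ge1; have := @leq_nfloor_div_fl _ a y n a_gt0.
have := @fl_add_gt _ a n s t y a_ge1 s_le_t n_le.
rewrite /mono_triple /dmemb /red /blue /in_range /=; lia.
Qed.

Lemma mono_triple_regions x y :
  mono_triple a n s t x y -> [|| low x y, mid x y, high x y | cross x y].
Proof.
have y_le_f := leq_fl y a_ge1; have below k := @fl_lt_leq_nfloor_div _ a y k a_gt0.
rewrite /mono_triple /red /blue /in_range /=.
case/and4P=> /andP[x_gt0 x_le_n] /andP[y_gt0 y_le_n] /andP[_ z_le_n].
case/orP=> [/and3P[rx ry rz] | /and3P[/andP[s_lt_x _] /andP[s_lt_y _] /andP[_ z_le_t]]];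
  apply/or4P; last first.
  by apply: Or42; have := below (t - s)%N; rewrite /dmemb; lia.
case/orP: rx => [x_le_s | t_lt_x].
  case/orP: rz => [z_le_s | t_lt_z].
    by apply: Or41; have := below s; rewrite /dmemb; lia.
  by apply: Or44; have := below n; have := @fl_le_t_sub_s y; rewrite /dmemb; lia.
by apply: Or43; have := below (n - t)%N; have := n_le_t_add_t; rewrite /dmemb; lia.
Qed.

Lemma mono_tripleE x y :
  mono_triple a n s t x y = [|| low x y, mid x y, high x y | cross x y].
Proof.
apply/idP/idP=> [/mono_triple_regions // |].
by case/or4P=> [/low_mono | /mid_mono | /high_mono | /cross_mono].
Qed.

Lemma regions_separated x y :
  [&& low x y ==> (x <= s) && (y <= t), mid x y ==> (s < x <= t) && (y <= t),
      high x y ==> (t < x) && (y <= t) & cross x y ==> (t < y)]%N.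
Proof.
have := leq_fl y a_ge1; have := nfloor_div_n_sub_t_le_s.
have := @leq_nfloor_div_fl _ a y s a_gt0; have := @leq_nfloor_div_fl _ a y (t - s) a_gt0.
rewrite /dmemb; lia.
Qed.

Lemma mono_triple_count x y :
  mono_triple a n s t x y = (low x y + mid x y + high x y + cross x y)%N :> nat.
Proof.
rewrite mono_tripleE; move: s_le_t (regions_separated x y).
by case: (low x y) (mid x y) (high x y) (cross x y) => [] [] [] [] /=; lia.
Qed.

Lemma Mcount_regions :
  Mcount a n s t = (dsum 1 (N s) 1 (fun y => s - fl a y)
    + dsum s.+1 (N (t - s)%N) s.+1 (fun y => t - fl a y)
    + dsum 1 (N (n - t)%N) t.+1 (fun y => n - fl a y)
    + dsum t.+1 (N n) 1 (fun y => n - fl a y))%N.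
Proof.
have N_le k := nfloor_div_leq k a_ge1.
rewrite /Mcount !(@dsumE n) //.
- rewrite -!big_split; apply: eq_bigr => y _; rewrite -!big_split.
  by apply: eq_bigr => x _; apply: mono_triple_count.
all: move: (N_le s) (N_le (t - s)%N) (N_le (n - t)%N) => *; lia.
Qed.

End Regions.

Theorem lemma4p1 (R : realType) (a : R) (n s t : nat) :
  1 <= a ->
  (1 <= s)%N -> (s <= t)%N -> (t <= n)%N ->
  n%:R <= a * s%:R + t%:R ->
  a * s%:R <= t%:R ->
  s%:R + a * s%:R <= t%:R ->
  Mcount a n s t =
    (dsum 1 (nfloor (s%:R / a)) 1 (fun y => (s - fl a y)%N)
   + dsum s.+1 (nfloor ((t - s)%N%:R / a)) s.+1 (fun y => (t - fl a y)%N)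
   + dsum 1 (nfloor ((n - t)%N%:R / a)) t.+1 (fun y => (n - fl a y)%N)
   + dsum t.+1 (nfloor (n%:R / a)) 1 (fun y => (n - fl a y)%N))%N
  /\
  (forall x y : nat,
    mono_triple a n s t x y <->
      (dmem 1 (nfloor (s%:R / a)) 1 (fun y => (s - fl a y)%N) x y
       \/ dmem s.+1 (nfloor ((t - s)%N%:R / a)) s.+1 (fun y => (t - fl a y)%N) x y
       \/ dmem 1 (nfloor ((n - t)%N%:R / a)) t.+1 (fun y => (n - fl a y)%N) x y
       \/ dmem t.+1 (nfloor (n%:R / a)) 1 (fun y => (n - fl a y)%N) x y)).
Proof.
move=> a_ge1 _ _ t_le_n n_le _ s_as_le.
split=> [|x y]; first exact: Mcount_regions.
rewrite (mono_tripleE a_ge1 t_le_n n_le s_as_le); split.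
  by case/or4P=> /dmemP; tauto.
by case=> [|[|[]]] /dmemP ->; rewrite ?orbT.
Qed.
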